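(* Let $\mathcal{G}=([N],[M],\mathsf{E})$ be an $(N,M,D,K,A)$-bipartite expander with $2A\ge D$, and let $\mathbf{H}_M$ be a Hadamard matrix of order $M$. Let $\mathbf{Q}\in\mathbb{R}^{MD\times N}$ be the pooling matrix constructed from $\mathcal{G}$ and $\mathbf{H}_M$ (as described in the context). Then for every $\bm{z}\in\{0,\pm1\}^N$ with $\lVert\bm{z}\rVert_0\le K$, \[ \lVert\mathbf{Q}\bm{z}\rVert_2^2\ \ge\ M(2A-D)\,\lVert\bm{z}\rVert_0, \qquad\text{and consequently}\qquad \lVert\mathbf{Q}\bm{z}\rVert_\infty\ \ge\ \sqrt{\tfrac{2A-D}{D}\,\lVert\bm{z}\rVert_0}. \]
   Context: A bipartite graph $\mathcal{G}=(\mathsf{L},\mathsf{R},\mathsf{E})$ with $\mathsf{L}=[N]=\{1,\dots,N\}$, $\mathsf{R}=[M]$ and edge set $\mathsf{E}\subseteq[N]\times[M]$ is left-$D$-regular if every left vertex $i$ has exactly $D$ neighbours; $\Gamma(i)$ denotes the set of neighbours of $i$ and $\Gamma(S)=\bigcup_{i\in S}\Gamma(i)$. It is an $(N,M,D,K,A)$-bipartite expander if it is left-$D$-regular and $|\Gamma(S)|\ge A|S|$ for every $S\subseteq[N]$ with $|S|\le K$. The induced matrix $\mathbf{B}_{\mathcal{G}}\in\{0,1\}^{M\times N}$ has $(j,i)$-entry $1$ iff $(i,j)\in\mathsf{E}$ (so each column has exactly $D$ ones). A Hadamard matrix of order $M$ is an $M\times M$ matrix $\mathbf{H}_M$ with entries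 $\pm1$ and $\mathbf{H}_M^{\intercal}\mathbf{H}_M=M\mathbf{I}$. Construction of $\mathbf{Q}$: write $\mathbf{B}_{\mathcal{G}}=\sum_{i=1}^D\mathbf{B}_i$ with each $\mathbf{B}_i\in\{0,1\}^{M\times N}$ having exactly one nonzero entry in each column (i.e. distribute the $D$ ones of each column among the $D$ matrices, one each); set $\mathbf{D}_i=\mathbf{H}_M\mathbf{B}_i$ and $\mathbf{Q}=\begin{bmatrix}\mathbf{D}_1\\ \vdots\\ \mathbf{D}_D\end{bmatrix}$. $\lVert\cdot\rVert_0$ counts nonzero entries. *)

From HB Require Import structures.
From mathcomp Require Import all_boot all_order all_algebra.
Set Implicit Arguments. Unset Strict Implicit. Unset Printing Implicit Defensive.
Import Order.TTheory GRing.Theory Num.Theory.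
Local Open Scope ring_scope.

Definition nbhd (N M : nat) (E : {set 'I_N * 'I_M}) (i : 'I_N) : {set 'I_M} :=
  [set j | (i, j) \in E].

Definition nbhdS (N M : nat) (E : {set 'I_N * 'I_M}) (S : {set 'I_N}) : {set 'I_M} :=
  \bigcup_(i in S) nbhd E i.

Definition left_regular (N M D : nat) (E : {set 'I_N * 'I_M}) : Prop :=
  forall i : 'I_N, #|nbhd E i| = D.

Definition bipartite_expander (R : numDomainType) (N M D K : nat) (A : R)
    (E : {set 'I_N * 'I_M}) : Prop :=
  left_regular D E /\
  forall S : {set 'I_N}, (#|S| <= K)%N -> A * #|S|%:R <= #|nbhdS E S|%:R.

Definition induced_matrix (R : nzRingType) (N M : nat) (E : {set 'I_N * 'I_M})
  : 'M[R]_(M, N) := \matrix_(j < M, i < N) ((i, j) \in E)%:R.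

Definition hadamard (R : nzRingType) (M : nat) (H : 'M[R]_M) : Prop :=
  (forall i j, H i j = 1 \/ H i j = -1) /\ H^T *m H = (M%:R)%:M.

Definition valid_split (R : nzRingType) (N M D : nat) (E : {set 'I_N * 'I_M})
    (Bs : 'I_D -> 'M[R]_(M, N)) : Prop :=
  (forall d j i, Bs d j i = 0 \/ Bs d j i = 1) /\
  (forall d i, #|[set j | Bs d j i != 0]| = 1%N) /\
  \sum_(d < D) Bs d = induced_matrix R E.

Definition pooling_matrix (R : nzRingType) (N M D : nat) (H : 'M[R]_M)
    (Bs : 'I_D -> 'M[R]_(M, N)) : 'M[R]_(\sum_(d < D) M, N) :=
  \mxcol_(d < D) (H *m Bs d).

Definition l0norm (R : nzRingType) (n : nat) (z : 'cV[R]_n) : nat :=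
  #|[set i | z i 0 != 0]|.

Definition sqnorm2 (R : nzRingType) (n : nat) (z : 'cV[R]_n) : R :=
  \sum_(i < n) z i 0 ^+ 2.

Definition linfnorm (R : numDomainType) (n : nat) (z : 'cV[R]_n) : R :=
  \big[Num.max/0]_(i < n) `|z i 0|.

From HB Require Import structures.
From mathcomp Require Import all_boot all_order all_algebra.
From mathcomp Require Import ring lra.
Set Implicit Arguments. Unset Strict Implicit. Unset Printing Implicit Defensive.
Import Order.TTheory GRing.Theory Num.Theory.
Local Open Scope ring_scope.

(* Let S = supp z.  Since H^T H = M·I, the squared norm splits as
   ||Q z||^2 = M · Σ_d ||B_d z||^2.  Each B_d is a 0/1 matrix with a single
   one per column, so (B_d z)_j is the sum of the ±1 values z_i over the
   c_{d,j} support columns met by row j; hence (B_d z)_j^2 >= 2·[c_{d,j} > 0]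
   - c_{d,j} (it is 1 when c_{d,j} = 1).  Summing over (d, j): the rows with
   c_{d,j} > 0 cover Γ(S), and Σ c_{d,j} = D|S|, so
   Σ_d ||B_d z||^2 >= 2|Γ(S)| - D|S| >= (2A - D)|S| by expansion.  The sup-norm
   bound follows from ||v||_2^2 <= (MD)·||v||_oo^2. *)

Definition supp (R : nzRingType) (n : nat) (z : 'cV[R]_n) : {set 'I_n} :=
  [set i | z i 0 != 0].

Definition zero_one_mx (R : nzRingType) (m n : nat) (B : 'M[R]_(m, n)) : Prop :=
  forall j i, B j i = 0 \/ B j i = 1.

Definition ternary_vec (R : nzRingType) (n : nat) (z : 'cV[R]_n) : Prop :=
  forall i, z i 0 = 0 \/ z i 0 = 1 \/ z i 0 = -1.

Definition row_support (R : nzRingType) (m n : nat) (B : 'M[R]_(m, n))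
    (S : {set 'I_n}) (j : 'I_m) : {set 'I_n} :=
  [set i in S | B j i != 0].

Lemma sqnorm2E (R : nzRingType) (n : nat) (v : 'cV[R]_n) :
  sqnorm2 v = (v^T *m v) 0 0.
Proof. by rewrite /sqnorm2 mxE; apply: eq_bigr => i _; rewrite !mxE expr2. Qed.

Lemma sqnorm2_mxcol (R : comNzRingType) (D : nat) (p : 'I_D -> nat)
    (C : forall d, 'cV[R]_(p d)) :
  sqnorm2 (\mxcol_d C d) = \sum_d sqnorm2 (C d).
Proof.
rewrite sqnorm2E tr_mxcol mul_mxrow_mxcol summxE.
by apply: eq_bigr => d _; rewrite sqnorm2E.
Qed.

Lemma sqnorm2_hadamard (R : comNzRingType) (M : nat) (H : 'M[R]_M)
    (v : 'cV[R]_M) :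
  hadamard H -> sqnorm2 (H *m v) = M%:R * sqnorm2 v.
Proof.
case=> _ HtH; rewrite !sqnorm2E trmx_mul mulmxA -(mulmxA _ _ H) HtH.
by rewrite mul_mx_scalar -scalemxAl mxE.
Qed.

Lemma pooling_sqnorm2 (R : comNzRingType) (N M D : nat) (H : 'M[R]_M)
    (Bs : 'I_D -> 'M[R]_(M, N)) (z : 'cV[R]_N) :
  hadamard H ->
  sqnorm2 (pooling_matrix H Bs *m z) = M%:R * \sum_(d < D) sqnorm2 (Bs d *m z).
Proof.
move=> hadH; rewrite /pooling_matrix mxcol_mul.
under eq_mxcol => d do rewrite -mulmxA.
by rewrite sqnorm2_mxcol mulr_sumr; apply: eq_bigr => d _; exact: sqnorm2_hadamard.
Qed.

Lemma linfnorm_ge0 (R : realDomainType) (n : nat) (v : 'cV[R]_n) :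
  0 <= linfnorm v.
Proof. by rewrite /linfnorm; elim/big_rec: _ => // i x _ x_ge0; rewrite le_max x_ge0 orbT. Qed.

Lemma sqnorm2_le_linfnorm (R : realDomainType) (n : nat) (v : 'cV[R]_n) :
  sqnorm2 v <= n%:R * linfnorm v ^+ 2.
Proof.
have -> : n%:R * linfnorm v ^+ 2 = \sum_(i < n) linfnorm v ^+ 2.
  by rewrite sumr_const card_ord mulr_natl.
apply: ler_sum => i _.
rewrite -(real_normK (num_real (v i 0))) lerXn2r ?nnegrE ?linfnorm_ge0 //.
by rewrite /linfnorm (bigD1 i) //= le_max lexx.
Qed.

Lemma sqrt_le_linfnorm (R : rcfType) (n : nat) (v : 'cV[R]_n) (x : R) :
  (0 < n)%N -> n%:R * x <= sqnorm2 v -> Num.sqrt x <= linfnorm v.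
Proof.
move=> n_gt0 /le_trans/(_ (sqnorm2_le_linfnorm v)); rewrite ler_pM2l ?ltr0n //.
by rewrite -ler_sqrt ?sqr_ge0 // sqrtr_sqr ger0_norm ?linfnorm_ge0.
Qed.

Lemma card_indicator (T : finType) (A : {pred T}) : #|A| = (\sum_x (x \in A))%N.
Proof. by rewrite -sum1_card big_mkcond; apply: eq_bigr => x _; case: (x \in A). Qed.

Lemma sum_row_support (R : nzRingType) (m n : nat) (B : 'M[R]_(m, n))
    (S : {set 'I_n}) :
  (forall i, #|[set j | B j i != 0]| = 1%N) ->
  (\sum_(j < m) #|row_support B S j| = #|S|)%N.
Proof.
move=> col1; under eq_bigr => j _ do rewrite card_indicator.
rewrite exchange_big [RHS]card_indicator; apply: eq_bigr => i _.
case iS: (i \in S); last by rewrite big1 // => j _; rewrite inE iS.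
by rewrite /= -(col1 i) card_indicator; apply: eq_bigr => j _; rewrite !inE iS.
Qed.

Lemma edge_in_summand (R : nzRingType) (N M D : nat) (E : {set 'I_N * 'I_M})
    (Bs : 'I_D -> 'M[R]_(M, N)) (i : 'I_N) (j : 'I_M) :
  \sum_(d < D) Bs d = induced_matrix R E -> (i, j) \in E ->
  exists d, Bs d j i != 0.
Proof.
move=> sumBs ijE; apply/existsP; apply: contraLR isT => /existsPn Bs0.
have : \sum_(d < D) Bs d j i = 1 by rewrite -summxE sumBs mxE ijE.
by rewrite big1 => [/eqP|d _]; [rewrite eq_sym oner_eq0 | apply/eqP/negPn].
Qed.

(* Every neighbour j of S is witnessed by some summand Bs d whose row j meets
   S, so |Γ(S)| is at most the number of such pairs (d, j). *)
Lemma nbhdS_le_hit_rows (R : nzRingType) (N M D : nat) (E : {set 'I_N * 'I_M})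
    (Bs : 'I_D -> 'M[R]_(M, N)) (S : {set 'I_N}) :
  \sum_(d < D) Bs d = induced_matrix R E ->
  (#|nbhdS E S| <= \sum_(d < D) \sum_(j < M) (0 < #|row_support (Bs d) S j|))%N.
Proof.
move=> sumBs; rewrite exchange_big card_indicator; apply: leq_sum => j _.
case: (boolP (j \in nbhdS E S)) => // /bigcupP[i iS]; rewrite inE => ijE.
have [d Bdji] := edge_in_summand sumBs ijE.
rewrite (bigD1 d) //= (leq_trans _ (leq_addr _ _)) // lt0b card_gt0.
by apply/set0Pn; exists i; rewrite !inE iS.
Qed.

Lemma zero_one_mul_row (R : nzRingType) (m n : nat) (B : 'M[R]_(m, n))
    (z : 'cV[R]_n) (j : 'I_m) :
  zero_one_mx B -> (B *m z) j 0 = \sum_(i in row_support B (supp z) j) z i 0.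
Proof.
move=> B01; rewrite mxE [RHS]big_mkcond /=; apply: eq_bigr => i _; rewrite !inE.
have [->|zi0] := eqVneq (z i 0) 0; first by rewrite mulr0 /=.
by case: (B01 j i) => ->; rewrite ?eqxx ?oner_eq0 ?mul0r ?mul1r.
Qed.

(* Square of a row entry of B z: if the row meets exactly one support column
   the entry is ±1; otherwise 2·[c > 0] - c <= 0, where c counts those
   columns. *)
Lemma row_entry_sqr_lower (R : realDomainType) (m n : nat) (B : 'M[R]_(m, n))
    (z : 'cV[R]_n) (j : 'I_m) :
  zero_one_mx B -> ternary_vec z ->
  2 * (0 < #|row_support B (supp z) j|)%:R - #|row_support B (supp z) j|%:R
    <= (B *m z) j 0 ^+ 2.
Proof.
move=> B01 z3; rewrite zero_one_mul_row //; set c := #|_|.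
have [c_gt1|] := ltnP 1 c.
  apply: le_trans (sqr_ge0 _); rewrite (ltn_trans _ c_gt1) //= mulr1.
  by rewrite subr_le0 (ler_nat R 2 c).
rewrite leq_eqVlt ltnS leqn0 => /orP[/cards1P[i0 supp1] | /eqP c0].
  have : i0 \in row_support B (supp z) j by rewrite supp1 set11.
  rewrite !inE => /andP[zi0 _].
  rewrite /c supp1 big_set1 cards1 /= mulr1.
  have : z i0 0 ^+ 2 = 1.
    case: (z3 i0) => [zi|[]->]; rewrite ?sqrrN ?expr1n //.
    by rewrite zi eqxx in zi0.
  by move=> ->; lra.
rewrite c0 /= mulr0 subrr; exact: sqr_ge0.
Qed.

(* Summing the local inequality over all rows of all summands: the rows that
   meet supp z cover Γ(supp z), while the total number of (row, support
   column) incidences is D·|supp z| since each column of each summand has a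
   single one. *)
Lemma split_sqnorm_lower (R : realDomainType) (N M D : nat)
    (E : {set 'I_N * 'I_M}) (Bs : 'I_D -> 'M[R]_(M, N)) (z : 'cV[R]_N) :
  valid_split E Bs -> ternary_vec z ->
  2 * #|nbhdS E (supp z)|%:R - D%:R * #|supp z|%:R
    <= \sum_(d < D) sqnorm2 (Bs d *m z).
Proof.
move=> [Bs01 [col1 sumBs]] z3.
apply: le_trans (ler_sum _ (fun d _ => ler_sum _ (fun j _ =>
  row_entry_sqr_lower j (Bs01 d) z3))).
under eq_bigr => d _ do
  rewrite sumrB -mulr_sumr -!natr_sum (sum_row_support _ (col1 d)).
rewrite sumrB -mulr_sumr -natr_sum sumr_const card_ord.
apply: lerB; last by rewrite mulr_natl.
rewrite ler_pM2l ?ltr0n // ler_nat; exact: nbhdS_le_hit_rows.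
Qed.

Lemma rows_pos_of_column (R : nzRingType) (m n : nat) (B : 'M[R]_(m, n))
    (i : 'I_n) :
  #|[set j | B j i != 0]| = 1%N -> (0 < m)%N.
Proof. by move=> col1; have := max_card [set j | B j i != 0]; rewrite col1 card_ord. Qed.

Theorem mainTheorem2 (R : rcfType) (N M D K : nat) (A : R)
    (E : {set 'I_N * 'I_M}) (H : 'M[R]_M) (Bs : 'I_D -> 'M[R]_(M, N)) :
  bipartite_expander D K A E ->
  D%:R <= 2 * A ->
  hadamard H ->
  valid_split E Bs ->
  forall z : 'cV[R]_N,
    (forall i, z i 0 = 0 \/ z i 0 = 1 \/ z i 0 = -1) ->
    (l0norm z <= K)%N ->
    M%:R * (2 * A - D%:R) * (l0norm z)%:R <= sqnorm2 (pooling_matrix H Bs *m z) /\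
    Num.sqrt ((2 * A - D%:R) / D%:R * (l0norm z)%:R)
      <= linfnorm (pooling_matrix H Bs *m z).
Proof.
move=> [_ expansion] D_le_2A hadH splitBs z z3 zK.
have sq_lower : M%:R * (2 * A - D%:R) * (l0norm z)%:R
    <= sqnorm2 (pooling_matrix H Bs *m z).
  rewrite pooling_sqnorm2 // -mulrA ler_wpM2l //.
  apply: le_trans (split_sqnorm_lower splitBs z3).
  have := expansion _ zK; rewrite /l0norm -/(supp z); lra.
split=> //.
have [D0|D_gt0] := posnP D.
  by rewrite (_ : D%:R = 0) ?D0 // invr0 mulr0 mul0r sqrtr0 linfnorm_ge0.
have [s0|/card_gt0P[i _]] := posnP (l0norm z).
  by rewrite s0 mulr0 sqrtr0 linfnorm_ge0.
have M_gt0 : (0 < M)%N.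
  by case: splitBs => _ [col1 _]; exact: rows_pos_of_column (col1 (Ordinal D_gt0) i).
apply: sqrt_le_linfnorm; first by rewrite sum_nat_const card_ord muln_gt0 D_gt0.
suff -> : (\sum_(d < D) M)%:R * ((2 * A - D%:R) / D%:R * (l0norm z)%:R)
    = M%:R * (2 * A - D%:R) * (l0norm z)%:R by [].
by rewrite sum_nat_const card_ord natrM; field; rewrite pnatr_eq0 -lt0n.
Qed.
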